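(* Let $G$ be a groupoid with class of objects $X$, let $A$ be a $G$-graded $k$-linear category (viewed as a right $kG$-comodule category), and let $B$ be the diagonal algebra $B_x=A_{e_x}$ (so $B=A^{{\rm co}kG}$). The following are equivalent: (1) $A$ is strongly graded, i.e. $A_\sigma A_\tau=A_{\sigma\tau}$ for all $x,y,z\in X$, $\sigma\in G_{xy}$, $\tau\in G_{yz}$; (2) $A_{\sigma^{-1}}A_\sigma=B_y$ for all $x,y\in X$ and $\sigma\in G_{xy}$; (3) the functors $F$ from $\mathcal{D}_k(X)_B$ to $G$-graded right $A$-modules, $F(N)_{xy}=N_x\otimes_{B_x}A_{xy}$ graded by $F(N)_\sigma=N_x\otimes_{B_x}A_\sigma$, and $G'$ in the other direction, $G'(M)_x=M_{e_x}$, form a pair of inverse equivalences; more precisely the unit maps $N_x\to N_x\otimes_{B_x}A_{e_x}$, $n\mapsto n\otimes 1_x$, and counit maps $M_{e_x}\otimes_{B_x}A_{xy}\to M_{xy}$, $m\otimes a\mapsto ma$, are all bijective; (4) $A$ is a $kG$-Galois category extension of $B$, i.e. for all $x,y,z\in X$ the map ${\rm can}^z_{xy}:A_{zx}\otimes_{B_x}A_{xy}\to A_{zy}\otimes kG_{xy}$, $a\otimes_{B_x}a'\mapsto\sum_{\sigma\in G_{xy}}aa'_\sigma\otimes\sigma$ (where $a'=\sum_\sigma a'_\sigma$ with $a'_\sigma\in A_\sigma$), is bijective.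
   Context: Let $k$ be a commutative ring; unadorned $\otimes$ is over $k$. A $k$-linear category $A$ with class of objects $X$ consists of $k$-modules $A_{xy}$, associative compositions $A_{xy}\otimes A_{yz}\to A_{xz}$, $a\otimes b\mapsto ab$, and units $1_x\in A_{xx}$. For a groupoid $G$ with objects $X$, $G_{xy}$ denotes the set of morphisms $y\to x$, $e_x\in G_{xx}$ the identity; $kG$ is the $k$-linear Hopf category with $kG_{xy}$ the free $k$-module on $G_{xy}$, composition extended linearly, $\Delta(\sigma)=\sigma\otimes\sigma$, $\varepsilon(\sigma)=1$, $S(\sigma)=\sigma^{-1}$. A $G$-graded $k$-linear category is a $k$-linear category $A$ with decompositions $A_{xy}=\bigoplus_{\sigma\in G_{xy}}A_\sigma$ such that $1_x\in A_{e_x}$ and $A_\sigma A_\tau\subseteq A_{\sigma\tau}$; it is a right $kG$-comodule category via $\rho(a)=a\otimes\sigma$ for $a\in A_\sigma$, and its coinvariants are $B_x=A_{e_x}$, a $k$-algebra; $A_{xy}$ is a $B_x$-$B_y$-bimodule by multiplication. $\mathcal{D}_k(X)_B$ is the category of families $(N_x)$ with $N_x$ a right $B_x$-module. A $G$-graded right $A$-module is a family $M=(M_{xy})$ with decompositions $M_{xy}=\bigoplus_{\sigma\in G_{xy}}M_\sigma$ and an associative unital right action $M_{xy}\otimes A_{yz}\to M_{xz}$ with $M_\sigma A_\tau\subseteq M_{\sigma\tau}$; morphisms are degree-preserving $A$-linear maps. $M_{e_x}$ is a right $B_x$-module. *)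

From HB Require Import structures.
From mathcomp Require Import all_boot all_order all_algebra.
Set Implicit Arguments. Unset Strict Implicit. Unset Printing Implicit Defensive.
Import GRing.Theory.
Local Open Scope ring_scope.

(* ghom x y = G_xy = the set of morphisms y -> x; composition
   G_xy x G_yz -> G_xz, (s, t) |-> s t.  Hom-sets carry decidable equality
   (eqType), needed to speak about homogeneous components. *)
Record groupoid (X : Type) := Groupoid {
  ghom :> X -> X -> eqType;
  gcomp : forall x y z, ghom x y -> ghom y z -> ghom x z;
  gid : forall x, ghom x x;
  ginv : forall x y, ghom x y -> ghom y x;
  gcompA : forall x y z w (s : ghom x y) (t : ghom y z) (u : ghom z w),
      gcomp s (gcomp t u) = gcomp (gcomp s t) u;
  gcomp1s : forall x y (s : ghom x y), gcomp (gid x) s = s;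
  gcomps1 : forall x y (s : ghom x y), gcomp s (gid y) = s;
  gcompVs : forall x y (s : ghom x y), gcomp (ginv s) s = gid y;
  gcompsV : forall x y (s : ghom x y), gcomp s (ginv s) = gid x
}.

Record klcat (k : comPzRingType) (X : Type) := KLCat {
  chom :> X -> X -> lmodType k;
  cmul : forall x y z, chom x y -> chom y z -> chom x z;
  cone : forall x, chom x x;
  cmulA : forall x y z w (a : chom x y) (b : chom y z) (c : chom z w),
      cmul a (cmul b c) = cmul (cmul a b) c;
  cmul1l : forall x y (a : chom x y), cmul (cone x) a = a;
  cmul1r : forall x y (a : chom x y), cmul a (cone y) = a;
  cmulDl : forall x y z (r : k) (a a' : chom x y) (b : chom y z),
      cmul (r *: a + a') b = r *: cmul a b + cmul a' b;
  cmulDr : forall x y z (r : k) (a : chom x y) (b b' : chom y z),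
      cmul a (r *: b + b') = r *: cmul a b + cmul a b'
}.

(* A_xy = (+)_{s in G_xy} A_s, encoded by the projections gc s : A_xy -> A_xy
   onto the components (a |-> a_s) and a (finite, duplicate-free) list
   gsupp a containing every s with a_s <> 0. *)
Record graded (k : comPzRingType) (X : Type) (G : groupoid X) (A : klcat k X) :=
  Graded {
  gc : forall x y, G x y -> A x y -> A x y;
  gsupp : forall x y, A x y -> seq (G x y);
  gc_lin : forall x y (s : G x y) (r : k) (a a' : A x y),
      gc s (r *: a + a') = r *: gc s a + gc s a';
  gc_sum : forall x y (a : A x y), a = \sum_(s <- gsupp a) gc s a;
  gc_out : forall x y (a : A x y) (s : G x y), s \notin gsupp a -> gc s a = 0;
  gsupp_uniq : forall x y (a : A x y), uniq (gsupp a);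
  gc_gc : forall x y (s t : G x y) (a : A x y),
      gc s (gc t a) = if s == t then gc t a else 0;
  gc_one : forall x, gc (gid G x) (cone A x) = cone A x;
  gc_mul : forall x y z (s : G x y) (t : G y z) (a : A x y) (b : A y z),
      gc s a = a -> gc t b = b -> gc (gcomp s t) (cmul a b) = cmul a b
}.

Section GradedDefs.
Variables (k : comPzRingType) (X : Type) (G : groupoid X) (A : klcat k X)
          (gA : graded G A).

Definition inDeg x y (s : G x y) (a : A x y) : Prop := gc gA s a = a.
Definition inB x (b : A x x) : Prop := inDeg (gid G x) b.

Definition prod_span_eq x y z (S : A x y -> Prop) (T : A y z -> Prop)
  (C : A x z -> Prop) : Prop :=
  forall c, C c <-> exists l : seq (A x y * A y z),
      (forall p, p \in l -> S p.1 /\ T p.2) /\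
      c = \sum_(p <- l) cmul p.1 p.2.

Definition strongly_graded : Prop :=
  forall x y z (s : G x y) (t : G y z),
    prod_span_eq (inDeg s) (inDeg t) (inDeg (gcomp s t)).

Definition inv_prod_cond : Prop :=
  forall x y (s : G x y), prod_span_eq (inDeg (ginv s)) (inDeg s) (@inB y).
End GradedDefs.

Definition is_klin (k : comPzRingType) (P Q : lmodType k) (h : P -> Q) : Prop :=
  forall (r : k) (u v : P), h (r *: u + v) = r *: h u + h v.

Definition balanced (k : comPzRingType) (U V R Q : lmodType k)
  (PU : U -> Prop) (PV : V -> Prop) (PB : R -> Prop)
  (ru : U -> R -> U) (lv : R -> V -> V) (g : U -> V -> Q) : Prop :=
  (forall r u u' v, PU u -> PU u' -> PV v -> g (r *: u + u') v = r *: g u v + g u' v) /\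
  (forall r u v v', PU u -> PV v -> PV v' -> g u (r *: v + v') = r *: g u v + g u v') /\
  (forall u b v, PU u -> PB b -> PV v -> g (ru u b) v = g u (lv b v)).

(* The k-linear map  PU (x)_{PB} PV -> P  induced by the balanced map f is
   bijective, expressed by the universal property of the tensor product:
   (P, f) is a tensor product of PU and PV over PB. *)
Definition tensor_map_bij (k : comPzRingType) (U V R P : lmodType k)
  (PU : U -> Prop) (PV : V -> Prop) (PB : R -> Prop)
  (ru : U -> R -> U) (lv : R -> V -> V) (f : U -> V -> P) : Prop :=
  forall (Q : lmodType k) (g : U -> V -> Q),
    balanced PU PV PB ru lv g ->
    (exists h : P -> Q, is_klin h /\
        forall u v, PU u -> PV v -> h (f u v) = g u v) /\
    (forall h h' : P -> Q, is_klin h -> is_klin h' ->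
        (forall u v, PU u -> PV v -> h (f u v) = g u v) ->
        (forall u v, PU u -> PV v -> h' (f u v) = g u v) ->
        forall w, h w = h' w).

(* A right B_x-module (B_x = A_{e_x} a subalgebra of A_xx): the action is a
   map N -> A_xx -> N, only its restriction to B_x is constrained. *)
Record rBmod (k : comPzRingType) (X : Type) (G : groupoid X) (A : klcat k X)
  (gA : graded G A) (x : X) := RBMod {
  nmod :> lmodType k;
  nact : nmod -> A x x -> nmod;
  nact1 : forall n, nact n (cone A x) = n;
  nactA : forall n b b', inB gA b -> inB gA b' ->
      nact (nact n b) b' = nact n (cmul b b');
  nactDl : forall r n n' b, inB gA b -> nact (r *: n + n') b = r *: nact n b + nact n' b;
  nactDr : forall r n b b', inB gA b -> inB gA b' ->
      nact n (r *: b + b') = r *: nact n b + nact n b'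
}.

Record grmod (k : comPzRingType) (X : Type) (G : groupoid X) (A : klcat k X)
  (gA : graded G A) := GrMod {
  mhom :> X -> X -> lmodType k;
  mact : forall x y z, mhom x y -> A y z -> mhom x z;
  mact1 : forall x y (m : mhom x y), mact m (cone A y) = m;
  mactA : forall x y z w (m : mhom x y) (a : A y z) (b : A z w),
      mact (mact m a) b = mact m (cmul a b);
  mactDl : forall x y z r (m m' : mhom x y) (a : A y z),
      mact (r *: m + m') a = r *: mact m a + mact m' a;
  mactDr : forall x y z r (m : mhom x y) (a a' : A y z),
      mact m (r *: a + a') = r *: mact m a + mact m a';
  mc : forall x y, G x y -> mhom x y -> mhom x y;
  msupp : forall x y, mhom x y -> seq (G x y);
  mc_lin : forall x y (s : G x y) (r : k) (m m' : mhom x y),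
      mc s (r *: m + m') = r *: mc s m + mc s m';
  mc_sum : forall x y (m : mhom x y), m = \sum_(s <- msupp m) mc s m;
  mc_out : forall x y (m : mhom x y) (s : G x y), s \notin msupp m -> mc s m = 0;
  msupp_uniq : forall x y (m : mhom x y), uniq (msupp m);
  mc_mc : forall x y (s t : G x y) (m : mhom x y),
      mc s (mc t m) = if s == t then mc t m else 0;
  mc_act : forall x y z (s : G x y) (t : G y z) (m : mhom x y) (a : A y z),
      mc s m = m -> gc gA t a = a -> mc (gcomp s t) (mact m a) = mact m a
}.

Section Conditions.
Variables (k : comPzRingType) (X : Type) (G : groupoid X) (A : klcat k X)
          (gA : graded G A).

(* (3) unit N_x -> N_x (x)_{B_x} A_{e_x} bijective: equivalently (the unit
   being a section of it) the multiplication N_x (x)_{B_x} B_x -> N_x,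
   n (x) b |-> n b, is bijective; and counit
   M_{e_x} (x)_{B_x} A_xy -> M_xy, m (x) a |-> m a, bijective. *)
Definition unit_bij : Prop :=
  forall x (N : rBmod gA x),
    tensor_map_bij (fun _ : N => True) (@inB _ _ _ _ gA x) (@inB _ _ _ _ gA x)
      (@nact _ _ _ _ _ _ N) (@cmul _ _ A x x x) (@nact _ _ _ _ _ _ N).

Definition counit_bij : Prop :=
  forall (M : grmod gA) x y,
    tensor_map_bij (fun m : M x x => @mc _ _ _ _ _ M x x (gid G x) m = m)
      (fun _ : A x y => True) (@inB _ _ _ _ gA x)
      (@mact _ _ _ _ _ M x x x) (@cmul _ _ A x x y) (@mact _ _ _ _ _ M x x y).

(* (4) can^z_xy : A_zx (x)_{B_x} A_xy -> A_zy (x) kG_xy,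
   a (x) a' |-> sum_s a a'_s (x) s, bijective.  Since
   A_zy (x) kG_xy = (+)_{s in G_xy} A_zy, a linear map out of it is a family
   (h_s)_s of linear maps A_zy -> Q, and h(can(a (x) a')) = sum_s h_s(a a'_s);
   bijectivity is expressed by the universal property of the tensor product. *)
Definition galois : Prop :=
  forall x y z (Q : lmodType k) (g : A z x -> A x y -> Q),
    balanced (fun _ => True) (fun _ => True) (@inB _ _ _ _ gA x)
      (@cmul _ _ A z x x) (@cmul _ _ A x x y) g ->
    (exists h : G x y -> A z y -> Q, (forall s, is_klin (h s)) /\
        forall a a', g a a' = \sum_(s <- gsupp gA a') h s (cmul a (gc gA s a'))) /\
    (forall h h' : G x y -> A z y -> Q,
        (forall s, is_klin (h s)) -> (forall s, is_klin (h' s)) ->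
        (forall a a', g a a' = \sum_(s <- gsupp gA a') h s (cmul a (gc gA s a'))) ->
        (forall a a', g a a' = \sum_(s <- gsupp gA a') h' s (cmul a (gc gA s a'))) ->
        forall s w, h s w = h' s w).
End Conditions.

From HB Require Import structures.
From mathcomp Require Import all_boot all_order all_algebra.
From mathcomp Require Import boolp.
Set Implicit Arguments. Unset Strict Implicit. Unset Printing Implicit Defensive.
Import GRing.Theory.
Local Open Scope ring_scope.

(* Everything reduces to the condition that [1_y] lies in [A_(s^-1) A_s] for every
   [s : y -> x].  A decomposition [1_y = sum_i a_i b_i] gives strong grading by
   multiplying on the left, and the rule [b = sum_i (b a_i) (x) b_i] for [b] in [A_s],
   where [b a_i] lies in [B_x], gives explicit inverses of [can] and of the counit.
   Conversely, surjectivity of [can], resp. of the counit for the shifted module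
   [A(s^-1)], puts [1_y (x) s], resp. [1_y], in the image, and projecting onto the
   right degrees yields a decomposition.  Bijectivity is stated through the universal
   property of the tensor product, so surjectivity is extracted from uniqueness by
   mapping to a quotient module.  The unit [N (x)_B B -> N] is always bijective. *)

Section KLinear.
Variables (k : comPzRingType) (U V : lmodType k) (f : U -> V).
Hypothesis f_lin : is_klin f.

Definition klin_linear : {linear U -> V} :=
  HB.pack f (GRing.isLinear.Build k U V *:%R f f_lin).

Lemma klin0 : f 0 = 0. Proof. exact: (linear0 klin_linear). Qed.

Lemma klinZ a u : f (a *: u) = a *: f u.
Proof. by rewrite -[a *: u]addr0 f_lin klin0 addr0. Qed.

Lemma klin_sum (I : Type) (r : seq I) (F : I -> U) :
  f (\sum_(i <- r) F i) = \sum_(i <- r) f (F i).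
Proof. exact: (linear_sum klin_linear). Qed.
End KLinear.

Lemma big_uniq_widen (T : eqType) (V : nmodType) (r1 r2 : seq T) (F : T -> V) :
  uniq r1 -> uniq r2 -> {subset r1 <= r2} -> (forall t, t \notin r1 -> F t = 0) ->
  \sum_(t <- r1) F t = \sum_(t <- r2) F t.
Proof.
move=> uniq1 uniq2 sub12 F0.
rewrite [RHS](bigID (mem r1)) /= [X in _ = _ + X]big1 ?addr0; last by move=> t /F0.
rewrite -[in RHS]big_filter; apply: perm_big; apply: uniq_perm; rewrite ?filter_uniq // => t.
by rewrite mem_filter andb_idr //; apply: sub12.
Qed.

Lemma big_ord_le1 (V : nmodType) n (F : 'I_n -> V) (i : 'I_n) :
  (n <= 1)%N -> \sum_j F j = F i.
Proof. by case: n F i => [|[|n]] F i // _; [case: i | rewrite big_ord1 (ord1 i)]. Qed.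

Section Span.
Variables (k : comPzRingType) (V : lmodType k) (I : eqType) (f : I -> V) (D : I -> Prop).

Definition span (v : V) : Prop := exists r : seq (k * I),
  (forall p, p \in r -> D p.2) /\ v = \sum_(p <- r) p.1 *: f p.2.

Lemma span0 : span 0.
Proof. by exists [::]; rewrite big_nil. Qed.

Lemma spanD u v : span u -> span v -> span (u + v).
Proof.
move=> [r1 [D1 ->]] [r2 [D2 ->]]; exists (r1 ++ r2); rewrite big_cat.
by split=> // p; rewrite mem_cat => /orP[]; [apply: D1 | apply: D2].
Qed.

Lemma spanZ a v : span v -> span (a *: v).
Proof.
move=> [r [Dr ->]]; exists [seq (a * p.1, p.2) | p <- r]; split.
  by move=> q /mapP[p rp ->]; exact: Dr rp.
by rewrite big_map scaler_sumr; apply: eq_bigr => p _; rewrite scalerA.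
Qed.

Lemma spanN v : span v -> span (- v).
Proof. by rewrite -scaleN1r; apply: spanZ. Qed.

Lemma span_gen i : D i -> span (f i).
Proof. by exists [:: (1, i)]; rewrite big_seq1 scale1r; split=> // p /[!inE] /eqP->. Qed.

Definition span_eqv (u v : V) : bool := `[< span (u - v) >].

Lemma span_eqv_refl : reflexive span_eqv.
Proof. by move=> u; apply/asboolP; rewrite subrr; apply: span0. Qed.

Lemma span_eqv_sym : symmetric span_eqv.
Proof. by move=> u v; apply/asboolP/asboolP => /spanN; rewrite opprB. Qed.

Lemma span_eqv_trans : transitive span_eqv.
Proof.
by move=> v u w /asboolP Suv /asboolP Svw; apply/asboolP; rewrite -(subrKA v); apply: spanD.
Qed.

Local Open Scope quotient_scope.

Definition span_eqv_rel := EquivRel span_eqv span_eqv_refl span_eqv_sym span_eqv_trans.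
Definition quot_span := {eq_quot span_eqv_rel}.
HB.instance Definition _ := Choice.copy quot_span {eq_quot span_eqv_rel}.
HB.instance Definition _ := Quotient.copy quot_span {eq_quot span_eqv_rel}.

Let pi (v : V) : quot_span := \pi v.

Lemma pi_eq u v : pi u = pi v <-> span (u - v).
Proof. by split=> [/eqquotP/asboolP | Suv]; last apply/eqquotP/asboolP. Qed.

Lemma span_repr_pi v : span (repr (pi v) - v).
Proof. by apply/pi_eq; rewrite /pi reprK. Qed.

Lemma quot_span_ind (R : quot_span -> Prop) : (forall v, R (pi v)) -> forall q, R q.
Proof. exact: quotW. Qed.

Let qadd (a b : quot_span) := pi (repr a + repr b).
Let qopp (a : quot_span) := pi (- repr a).
Let qscale (r : k) (a : quot_span) := pi (r *: repr a).

Lemma qaddE u v : qadd (pi u) (pi v) = pi (u + v).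
Proof.
by apply/pi_eq; rewrite opprD addrACA; apply: spanD; apply: span_repr_pi.
Qed.

Lemma qoppE v : qopp (pi v) = pi (- v).
Proof. by apply/pi_eq; rewrite opprK addrC -opprB; apply/spanN/span_repr_pi. Qed.

Lemma qscaleE r v : qscale r (pi v) = pi (r *: v).
Proof. by apply/pi_eq; rewrite -scalerBr; apply/spanZ/span_repr_pi. Qed.

Fact qaddA : associative qadd.
Proof.
by elim/quot_span_ind=> a; elim/quot_span_ind=> b; elim/quot_span_ind=> c; rewrite !qaddE addrA.
Qed.
Fact qaddC : commutative qadd.
Proof. by elim/quot_span_ind=> a; elim/quot_span_ind=> b; rewrite !qaddE addrC. Qed.
Fact qadd0 : left_id (pi 0) qadd.
Proof. by elim/quot_span_ind=> ?; rewrite qaddE add0r. Qed.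
Fact qaddN : left_inverse (pi 0) qopp qadd.
Proof. by elim/quot_span_ind=> ?; rewrite qoppE qaddE addNr. Qed.
HB.instance Definition _ := GRing.isZmodule.Build quot_span qaddA qaddC qadd0 qaddN.

Lemma piD u v : pi u + pi v = pi (u + v). Proof. exact: qaddE. Qed.

Fact qscaleA a b q : qscale a (qscale b q) = qscale (a * b) q.
Proof. by elim/quot_span_ind: q => ?; rewrite !qscaleE scalerA. Qed.
Fact qscale1 : left_id 1 qscale.
Proof. by elim/quot_span_ind=> ?; rewrite qscaleE scale1r. Qed.
Fact qscaleDr : right_distributive qscale +%R.
Proof.
by move=> r; elim/quot_span_ind=> a; elim/quot_span_ind=> b; rewrite piD !qscaleE piD scalerDr.
Qed.
Fact qscaleDl q a b : qscale (a + b) q = qscale a q + qscale b q.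
Proof. by elim/quot_span_ind: q => ?; rewrite !qscaleE piD scalerDl. Qed.
HB.instance Definition _ :=
  GRing.Zmodule_isLmodule.Build k quot_span qscaleA qscale1 qscaleDr qscaleDl.

Lemma pi_klin : is_klin pi.
Proof. by move=> r u v; rewrite -[RHS]/(qadd (qscale r (pi u)) (pi v)) qscaleE qaddE. Qed.

Lemma pi_eq0 v : pi v = 0 <-> span v.
Proof. by rewrite -[0]/(pi 0) pi_eq subr0. Qed.

Lemma span_total :
  (forall (Q : lmodType k) (phi : V -> Q), is_klin phi ->
     (forall i, D i -> phi (f i) = 0) -> forall v, phi v = 0) ->
  forall v, span v.
Proof.
move=> sep v; apply/pi_eq0; apply: sep => [|i Di]; first exact: pi_klin.
by apply/pi_eq0/span_gen.
Qed.
End Span.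

Section GroupoidTheory.
Variables (X : Type) (G : groupoid X).

Lemma ginvK x y (s : G x y) : ginv (ginv s) = s.
Proof. by rewrite -[LHS]gcomps1 -(gcompVs s) gcompA gcompVs gcomp1s. Qed.

Lemma gcompKs x y z (s : G x y) (t : G y z) : gcomp (ginv s) (gcomp s t) = t.
Proof. by rewrite gcompA gcompVs gcomp1s. Qed.

Lemma gcompKVs x y z (s : G y x) (t : G y z) : gcomp s (gcomp (ginv s) t) = t.
Proof. by rewrite gcompA gcompsV gcomp1s. Qed.

Lemma eqg_comp2l x y z (r : G z x) (u v : G x y) : (gcomp r u == gcomp r v) = (u == v).
Proof. by apply/eqP/eqP => [ruv|-> //]; rewrite -[u](gcompKs r) ruv gcompKs. Qed.

Lemma eqg_comp2r x y z (u v : G z x) (s : G x y) : (gcomp u s == gcomp v s) = (u == v).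
Proof.
apply/eqP/eqP => [usv|-> //].
by rewrite -[u]gcomps1 -[v]gcomps1 -(gcompsV s) !gcompA usv.
Qed.
End GroupoidTheory.

Section LinearCategory.
Variables (k : comPzRingType) (X : Type) (A : klcat k X).

Lemma cmul_klinl x y z (b : A y z) : is_klin (fun a : A x y => cmul a b).
Proof. by move=> r u v; rewrite cmulDl. Qed.

Lemma cmul_klinr x y z (a : A x y) : is_klin (fun b : A y z => cmul a b).
Proof. by move=> r u v; rewrite cmulDr. Qed.

Lemma cmul0l x y z (b : A y z) : cmul (0 : A x y) b = 0.
Proof. exact: klin0 (cmul_klinl b). Qed.

Lemma cmul0r x y z (a : A x y) : cmul a (0 : A y z) = 0.
Proof. exact: klin0 (cmul_klinr a). Qed.

Lemma cmulZl x y z r (a : A x y) (b : A y z) : cmul (r *: a) b = r *: cmul a b.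
Proof. by rewrite (klinZ (cmul_klinl b)). Qed.

Lemma cmulZr x y z r (a : A x y) (b : A y z) : cmul a (r *: b) = r *: cmul a b.
Proof. by rewrite (klinZ (cmul_klinr a)). Qed.

Lemma cmul_suml x y z (b : A y z) I (r : seq I) (F : I -> A x y) :
  cmul (\sum_(i <- r) F i) b = \sum_(i <- r) cmul (F i) b.
Proof. exact: (klin_sum (cmul_klinl b)). Qed.

Lemma cmul_sumr x y z (a : A x y) I (r : seq I) (F : I -> A y z) :
  cmul a (\sum_(i <- r) F i) = \sum_(i <- r) cmul a (F i).
Proof. exact: (klin_sum (cmul_klinr a)). Qed.
End LinearCategory.

Section GradedCategory.
Variables (k : comPzRingType) (X : Type) (G : groupoid X) (A : klcat k X)
  (gA : graded G A).

Lemma gc_klin x y (s : G x y) : is_klin (gc gA s).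
Proof. by move=> r u v; rewrite gc_lin. Qed.

Lemma inDeg_gc x y (s : G x y) a : inDeg gA s (gc gA s a).
Proof. by rewrite /inDeg gc_gc eqxx. Qed.

Lemma gc_inDeg x y (s t : G x y) a : inDeg gA s a -> gc gA t a = if t == s then a else 0.
Proof. by move=> Da; rewrite -{1}Da gc_gc Da. Qed.

Lemma inDeg0 x y (s : G x y) : inDeg gA s 0.
Proof. exact: klin0 (gc_klin s). Qed.

Lemma inB1 x : inB gA (cone A x).
Proof. exact: gc_one. Qed.

Lemma inDeg_sum_cmul x y z (s : G x y) (t : G y z) (r : seq (A x y * A y z)) :
  (forall p, p \in r -> inDeg gA s p.1 /\ inDeg gA t p.2) ->
  inDeg gA (gcomp s t) (\sum_(p <- r) cmul p.1 p.2).
Proof.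
move=> Dr; rewrite /inDeg (klin_sum (gc_klin _)); apply: eq_big_seq => p /Dr[Dp1 Dp2].
exact: gc_mul.
Qed.

Lemma sum_gsupp_single x y (a : A x y) (s : G x y) (V : nmodType) (F : G x y -> A x y -> V) :
  F s 0 = 0 -> (forall t, t != s -> F t (gc gA t a) = 0) ->
  \sum_(t <- gsupp gA a) F t (gc gA t a) = F s (gc gA s a).
Proof.
move=> Fs0 Fne; have [sa | nsa] := boolP (s \in gsupp gA a).
  rewrite (big_rem s sa) /= big_seq big1 ?addr0 // => t.
  by rewrite mem_rem_uniq ?gsupp_uniq // => /andP[/Fne].
rewrite gc_out // Fs0 big_seq big1 // => t ta; apply: Fne.
by apply: contraNneq nsa => <-.
Qed.

Lemma sum_gsupp_inDeg x y (s : G x y) (b : A x y) (V : nmodType) (F : G x y -> A x y -> V) :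
  (forall t, F t 0 = 0) -> inDeg gA s b ->
  \sum_(t <- gsupp gA b) F t (gc gA t b) = F s b.
Proof.
move=> F0 Db; rewrite (sum_gsupp_single (s := s)) ?Db // => t ts.
by rewrite (gc_inDeg _ Db) (negbTE ts).
Qed.

Lemma gc_cmul_homl x y z (u : G z x) (s : G x y) (a : A z x) (b : A x y) :
  inDeg gA s b -> gc gA (gcomp u s) (cmul a b) = cmul (gc gA u a) b.
Proof.
move=> Db; rewrite {1}(gc_sum gA a) cmul_suml (klin_sum (gc_klin _)).
rewrite (sum_gsupp_single (s := u) (F := fun v c => gc gA (gcomp u s) (cmul c b))).
- exact/gc_mul/Db/inDeg_gc.
- by rewrite cmul0l inDeg0.
move=> v vu; rewrite (gc_inDeg _ (gc_mul (inDeg_gc v a) Db)).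
by rewrite eqg_comp2r eq_sym (negbTE vu).
Qed.

Lemma gc_cmul_homr x y z (u : G z x) (s : G x y) (a : A z x) (b : A x y) :
  inDeg gA u a -> gc gA (gcomp u s) (cmul a b) = cmul a (gc gA s b).
Proof.
move=> Da; rewrite {1}(gc_sum gA b) cmul_sumr (klin_sum (gc_klin _)).
rewrite (sum_gsupp_single (s := s) (F := fun v c => gc gA (gcomp u s) (cmul a c))).
- exact/gc_mul/inDeg_gc.
- by rewrite cmul0r inDeg0.
move=> v vs; rewrite (gc_inDeg _ (gc_mul Da (inDeg_gc v b))).
by rewrite eqg_comp2l eq_sym (negbTE vs).
Qed.
End GradedCategory.

Section Balanced.
Variables (k : comPzRingType) (U V R Q : lmodType k) (PU : U -> Prop) (PB : R -> Prop)
  (ru : U -> R -> U) (lv : R -> V -> V).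

Lemma balanced0 (PV : V -> Prop) : balanced PU PV PB ru lv (fun _ _ => 0 : Q).
Proof. by do 2?split=> *; rewrite ?scaler0 ?addr0. Qed.

Variable (g : U -> V -> Q).
Hypothesis g_bal : balanced PU (fun _ => True) PB ru lv g.

Lemma balanced_klinr u : PU u -> is_klin (g u).
Proof. by move=> Pu r v v'; apply: g_bal.2.1. Qed.

Lemma balanced0l v : PU 0 -> g 0 v = 0.
Proof.
move=> PU0; have := g_bal.1 1 0 0 v PU0 PU0 I; rewrite !scale1r addr0 => e.
by apply: (addrI (g 0 v)); rewrite addr0 -e.
Qed.
End Balanced.

Section OneDecomposition.
Variables (k : comPzRingType) (X : Type) (G : groupoid X) (A : klcat k X)
  (gA : graded G A).

Definition one_decomp x y (s : G x y) (r : seq (A y x * A x y)) : Prop :=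
  (forall p, p \in r -> inDeg gA (ginv s) p.1 /\ inDeg gA s p.2) /\
  cone A y = \sum_(p <- r) cmul p.1 p.2.

Definition one_decomposable : Prop := forall x y (s : G x y), exists r, one_decomp s r.

Lemma strongly_graded_inv_prod : strongly_graded gA -> inv_prod_cond gA.
Proof. by move=> sgA x y s; have := sgA _ _ _ (ginv s) s; rewrite gcompVs. Qed.

Lemma inv_prod_one_decomposable : inv_prod_cond gA -> one_decomposable.
Proof.
move=> ipA x y s; have [/(_ (inB1 gA y))[r [Dr e1]] _] := ipA x y s (cone A y).
by exists r.
Qed.

Lemma one_decomposable_strongly_graded : one_decomposable -> strongly_graded gA.
Proof.
move=> decA x y z s t c; split=> [Dc | [r [Dr ->]]]; last exact: inDeg_sum_cmul.
have [r [Dr e1]] := decA _ _ (ginv s).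
exists [seq (p.1, cmul p.2 c) | p <- r]; split.
  move=> q /mapP[p /Dr[Dp1 Dp2] ->] /=; split; first by rewrite ginvK in Dp1.
  by have := gc_mul Dp2 Dc; rewrite gcompKs.
by rewrite big_map -{1}[c]cmul1l e1 cmul_suml; apply: eq_bigr => p _; rewrite cmulA.
Qed.

(* [b = b 1_y = sum_i (b a_i) b_i] with [b a_i] in [B_x]. *)
Lemma balanced_one_decomp x y (s : G x y) r (U Q : lmodType k) (PU : U -> Prop)
    (ru : U -> A x x -> U) (g : U -> A x y -> Q) :
  one_decomp s r -> balanced PU (fun _ => True) (@inB _ _ _ _ gA x) ru (@cmul _ _ A x x y) g ->
  forall u b, PU u -> inDeg gA s b -> g u b = \sum_(p <- r) g (ru u (cmul b p.1)) p.2.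
Proof.
move=> [Dr e1] g_bal u b Pu Db.
rewrite -{1}[b]cmul1r e1 cmul_sumr (klin_sum (balanced_klinr g_bal Pu)).
apply: eq_big_seq => p /Dr[Dp1 _]; rewrite cmulA g_bal.2.2 //.
by rewrite /inB -(gcompsV s); apply: gc_mul.
Qed.

End OneDecomposition.

Section Galois.
Variables (k : comPzRingType) (X : Type) (G : groupoid X) (A : klcat k X)
  (gA : graded G A).

Lemma one_decomposable_galois : one_decomposable gA -> galois gA.
Proof.
move=> decA x y z Q g g_bal.
have /choice[d Dd] : forall s : G x y, exists r, one_decomp gA s r := decA x y.
have g_lin a : is_klin (g a) := balanced_klinr g_bal (I : True).
pose h s (w : A z y) := \sum_(p <- d s) g (cmul w p.1) p.2.
suff h_uniq hh : (forall s, is_klin (hh s)) ->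
    (forall a a', g a a' = \sum_(s <- gsupp gA a') hh s (cmul a (gc gA s a'))) ->
    forall s w, hh s w = h s w.
  split=> [|hh hh' ? ? ? ? s w]; last by rewrite !h_uniq.
  exists h; split=> [s r u v | a a'].
    rewrite /h scaler_sumr -big_split; apply: eq_bigr => p _.
    by rewrite cmulDl g_bal.1.
  rewrite {1}(gc_sum gA a') (klin_sum (g_lin a)); apply: eq_bigr => s _.
  rewrite (balanced_one_decomp (Dd s) g_bal I (inDeg_gc gA s a')).
  by apply: eq_bigr => p _; rewrite cmulA.
move=> hh_lin hhE s w; have [Dds e1] := Dd s.
rewrite -{1}[w]cmul1r e1 cmul_sumr (klin_sum (hh_lin s)); apply: eq_big_seq => p /Dds[_ Dp2].
rewrite hhE cmulA (sum_gsupp_inDeg (F := fun t c => hh t (cmul (cmul w p.1) c)) _ Dp2) //.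
by move=> t; rewrite cmul0r klin0.
Qed.

Lemma galois_one_decomposable : galois gA -> one_decomposable gA.
Proof.
move=> galA x y s.
have [r [Dr e1]] : span (fun p : A y x * A x y => cmul p.1 p.2)
    (fun p => inDeg gA s p.2) (cone A y).
  apply: span_total => Q phi phi_lin phi0 v.
  have [_ can_uniq] := galA x y y Q _ (balanced0 _ _ _ _ _ _).
  pose h t w := if t == s then phi w else 0.
  have := can_uniq (fun _ _ => 0) h _ _ _ _ s v; rewrite /h eqxx => -> //.
  - by move=> t r u u'; rewrite scaler0 addr0.
  - by move=> t; case: eqP => // _ r u u'; rewrite scaler0 addr0.
  - by move=> a a'; rewrite big1.
  move=> a a'; rewrite big1 // => t _; case: eqP => // ->.
  by rewrite (phi0 (a, gc gA s a')) //; apply: inDeg_gc.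
exists [seq (gc gA (ginv s) (q.1 *: q.2.1), q.2.2) | q <- r]; split.
  by move=> p /mapP[q /Dr Dq ->]; split=> //; apply: inDeg_gc.
rewrite big_map -(inB1 gA y) /inB -(gcompVs s) e1 (klin_sum (gc_klin _ _)).
apply: eq_big_seq => q /Dr Dq /=.
by rewrite -(gc_cmul_homl _ _ Dq) cmulZl (klinZ (gc_klin _ _)).
Qed.
End Galois.

Section GradedModule.
Variables (k : comPzRingType) (X : Type) (G : groupoid X) (A : klcat k X)
  (gA : graded G A) (M : grmod gA).

Lemma mact_klinl x y z (a : A y z) : is_klin (fun m : M x y => mact m a).
Proof. by move=> r u v; rewrite mactDl. Qed.

Lemma mact_klinr x y z (m : M x y) : is_klin (fun a : A y z => mact m a).
Proof. by move=> r u v; rewrite mactDr. Qed.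

Lemma mc_klin x y (s : G x y) : is_klin (mc s : M x y -> M x y).
Proof. by move=> r u v; rewrite mc_lin. Qed.

Lemma mc_mact_hom x y (s : G x y) (m : M x x) (a : A x y) :
  mc (gid G x) m = m -> mc s (mact m a) = mact m (gc gA s a).
Proof.
move=> Em; have mc_homE t b : mc t (mact m (gc gA t b)) = mact m (gc gA t b).
  by have := mc_act Em (inDeg_gc gA t b); rewrite gcomp1s.
rewrite {1}(gc_sum gA a) (klin_sum (mact_klinr m)) (klin_sum (mc_klin s)).
rewrite (sum_gsupp_single (s := s) (F := fun t b => mc s (mact m b))) ?mc_homE //.
  by rewrite (klin0 (mact_klinr m)) (klin0 (mc_klin s)).
by move=> t ts; rewrite -mc_homE mc_mc eq_sym (negbTE ts).
Qed.

Section SupportSum.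
Variables (x y : X) (Q : lmodType k) (F : G x y -> M x y -> Q).
Hypothesis F_supp : forall s w, mc s w = 0 -> F s w = 0.

Lemma sum_msupp_widen (w : M x y) (r : seq (G x y)) : uniq r -> {subset msupp w <= r} ->
  \sum_(s <- msupp w) F s w = \sum_(s <- r) F s w.
Proof.
move=> ur sub; apply: big_uniq_widen; rewrite ?msupp_uniq // => s ns.
by apply: F_supp; apply: mc_out.
Qed.

Lemma klin_sum_msupp : (forall s, is_klin (F s)) ->
  is_klin (fun w => \sum_(s <- msupp w) F s w).
Proof.
move=> F_lin r u v; set S := msupp (r *: u + v) ++ msupp u ++ msupp v.
have sub w : {subset msupp w <= S} -> {subset msupp w <= undup S}.
  by move=> sw t /sw; rewrite mem_undup.
rewrite !(sum_msupp_widen (r := undup S)) ?undup_uniq //; last 3 first.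
- by apply: sub => t; rewrite !mem_cat => ->; rewrite ?orbT.
- by apply: sub => t; rewrite !mem_cat => ->; rewrite ?orbT.
- by apply: sub => t; rewrite !mem_cat => ->.
by rewrite scaler_sumr -big_split; apply: eq_bigr => s _; apply: F_lin.
Qed.
End SupportSum.
End GradedModule.

Section ShiftModule.
Variables (k : comPzRingType) (X : Type) (G : groupoid X) (A : klcat k X)
  (gA : graded G A) (w : X) (ro : forall x : X, option (G w x)).

(* The graded module with [M_xy = A_wy], graded by [M_t = A_(r t)], when [ro x = Some r],
   and [M_xy = 0] when [ro x = None]; the latter is encoded by an empty index type. *)
Definition shift_dim x : nat := isSome (ro x).
Definition shift_hom x y : lmodType k := {ffun 'I_(shift_dim x) -> A w y}.

Definition shift_act x y z (m : shift_hom x y) (a : A y z) : shift_hom x z :=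
  [ffun i => cmul (m i) a].

Definition shift_comp x y (t : G x y) (m : shift_hom x y) : shift_hom x y :=
  [ffun i => if ro x is Some r then gc gA (gcomp r t) (m i) else 0].

Definition shift_supp x y (m : shift_hom x y) : seq (G x y) :=
  if ro x is Some r then [seq gcomp (ginv r) s | s <- gsupp gA (\sum_j m j)] else [::].

Lemma shift_dom_Some x : 'I_(shift_dim x) -> isSome (ro x).
Proof. by case=> i; rewrite /shift_dim; case: (ro x). Qed.

Lemma shift_sumE x y (m : shift_hom x y) i : \sum_j m j = m i.
Proof. exact: big_ord_le1 (leq_b1 _). Qed.

Fact shift_act1 x y (m : shift_hom x y) : shift_act m (cone A y) = m.
Proof. by apply/ffunP => i; rewrite ffunE cmul1r. Qed.

Fact shift_actA x y z t (m : shift_hom x y) (a : A y z) (b : A z t) :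
  shift_act (shift_act m a) b = shift_act m (cmul a b).
Proof. by apply/ffunP => i; rewrite !ffunE cmulA. Qed.

Fact shift_actDl x y z r (m m' : shift_hom x y) (a : A y z) :
  shift_act (r *: m + m') a = r *: shift_act m a + shift_act m' a.
Proof. by apply/ffunP => i; rewrite !ffunE cmulDl. Qed.

Fact shift_actDr x y z r (m : shift_hom x y) (a a' : A y z) :
  shift_act m (r *: a + a') = r *: shift_act m a + shift_act m a'.
Proof. by apply/ffunP => i; rewrite !ffunE cmulDr. Qed.

Fact shift_comp_lin x y (s : G x y) r (m m' : shift_hom x y) :
  shift_comp s (r *: m + m') = r *: shift_comp s m + shift_comp s m'.
Proof.
apply/ffunP => i; rewrite !ffunE; case: (ro x) => [q|]; first by rewrite gc_lin.
by rewrite scaler0 addr0.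
Qed.

Fact shift_comp_sum x y (m : shift_hom x y) : m = \sum_(s <- shift_supp m) shift_comp s m.
Proof.
apply/ffunP => i; rewrite sum_ffunE /shift_supp.
case E: (ro x) => [q|]; last by move: (shift_dom_Some i); rewrite E.
rewrite big_map (shift_sumE m i) {1}(gc_sum gA (m i)).
by apply: eq_bigr => s _; rewrite ffunE E gcompKVs.
Qed.

Fact shift_comp_out x y (m : shift_hom x y) (s : G x y) :
  s \notin shift_supp m -> shift_comp s m = 0.
Proof.
rewrite /shift_supp => ns; apply/ffunP => i; rewrite !ffunE.
case E: (ro x) => [q|] //; rewrite E in ns.
rewrite -(shift_sumE m i) gc_out //; apply: contra ns => qs.
by apply/mapP; exists (gcomp q s) => //; rewrite gcompKs.
Qed.

Fact shift_supp_uniq x y (m : shift_hom x y) : uniq (shift_supp m).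
Proof.
rewrite /shift_supp; case: (ro x) => [q|] //.
by rewrite map_inj_uniq ?gsupp_uniq // => s t /eqP; rewrite eqg_comp2l => /eqP.
Qed.

Fact shift_comp_comp x y (s t : G x y) (m : shift_hom x y) :
  shift_comp s (shift_comp t m) = if s == t then shift_comp t m else 0.
Proof.
apply/ffunP => i; rewrite !ffunE.
case E: (ro x) => [q|]; last by move: (shift_dom_Some i); rewrite E.
by rewrite gc_gc eqg_comp2l; case: (s == t); rewrite ?ffunE ?E.
Qed.

Fact shift_comp_act x y z (s : G x y) (t : G y z) (m : shift_hom x y) (a : A y z) :
  shift_comp s m = m -> gc gA t a = a ->
  shift_comp (gcomp s t) (shift_act m a) = shift_act m a.
Proof.
move=> Dm Da; apply/ffunP => i; rewrite !ffunE.
case E: (ro x) => [q|]; last by move: (shift_dom_Some i); rewrite E.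
have Dmi : gc gA (gcomp q s) (m i) = m i by move/ffunP: Dm => /(_ i); rewrite ffunE E.
by rewrite gcompA; apply: gc_mul.
Qed.

Definition shift_grmod : grmod gA :=
  GrMod shift_act1 shift_actA shift_actDl shift_actDr shift_comp_lin shift_comp_sum
    shift_comp_out shift_supp_uniq shift_comp_comp shift_comp_act.
End ShiftModule.

Section Counit.
Variables (k : comPzRingType) (X : Type) (G : groupoid X) (A : klcat k X)
  (gA : graded G A).

Lemma unit_bijective : unit_bij gA.
Proof.
move=> x N Q g [g_linl [_ g_bal]]; split.
  exists (fun n => g n (cone A x)); split=> [r u v | n b _ Bb].
    by apply: g_linl => //; apply: inB1.
  by rewrite g_bal ?cmul1r //; apply: inB1.
by move=> h h' _ _ hE h'E n; rewrite -(nact1 n) hE ?h'E //; apply: inB1.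
Qed.
Lemma one_decomposable_counit : one_decomposable gA -> counit_bij gA.
Proof.
move=> decA M x y Q g g_bal.
have /choice[d Dd] : forall s : G x y, exists r, one_decomp gA s r := decA x y.
have PU0 : mc (gid G x) (0 : M x x) = 0 by exact: (klin0 (mc_klin (M := M) _)).
have M_e s (w : M x y) p : p \in d s -> mc (gid G x) (mact (mc s w) p.1) = mact (mc s w) p.1.
  move=> dp; have [Dp1 _] := (Dd s).1 p dp.
  have Ew : mc s (mc s w) = mc s w by rewrite mc_mc eqxx.
  by have := mc_act Ew Dp1; rewrite gcompsV.
pose F s (w : M x y) := \sum_(p <- d s) g (mact (mc s w) p.1) p.2.
have F_supp s w : mc s w = 0 -> F s w = 0.
  move=> w0; rewrite /F big1 // => p _.
  by rewrite w0 (klin0 (mact_klinl (M := M) p.1)) (balanced0l g_bal).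
have F_lin s : is_klin (F s).
  move=> r u v; rewrite /F scaler_sumr -big_split; apply: eq_big_seq => p dp.
  by rewrite mc_lin mactDl g_bal.1 ?M_e.
pose h w := \sum_(s <- msupp w) F s w.
suff h_uniq hh : is_klin hh ->
    (forall m a, mc (gid G x) m = m -> True -> hh (mact m a) = g m a) ->
    forall w, hh w = h w.
  split=> [|hh hh' ? ? ? ? w]; last by rewrite !h_uniq.
  exists h; split=> [|m a Em _]; first exact: klin_sum_msupp.
  set L := undup (msupp (mact m a) ++ gsupp gA a).
  have uL : uniq L := undup_uniq _.
  have subL t : t \in msupp (mact m a) ++ gsupp gA a -> t \in L by rewrite mem_undup.
  rewrite /h (sum_msupp_widen F_supp uL); last by move=> t mt; rewrite subL // mem_cat mt.
  rewrite {2}(gc_sum gA a) (klin_sum (balanced_klinr g_bal Em)).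
  rewrite (big_uniq_widen (gsupp_uniq gA a) uL); first last.
  - by move=> t ta; rewrite gc_out // (klin0 (balanced_klinr g_bal Em)).
  - by move=> t ta; rewrite subL // mem_cat ta orbT.
  apply: eq_bigr => s _; rewrite /F mc_mact_hom //.
  rewrite (balanced_one_decomp (Dd s) g_bal Em (inDeg_gc gA s a)).
  by apply: eq_bigr => p _; rewrite mactA.
move=> hh_lin hhE w; rewrite {1}(mc_sum w) (klin_sum hh_lin); apply: eq_bigr => s _.
have [_ e1] := Dd s.
rewrite /F -{1}[mc s w]mact1 e1 (klin_sum (mact_klinr (mc s w))) (klin_sum hh_lin).
by apply: eq_big_seq => p dp; rewrite -mactA hhE ?M_e.
Qed.

Lemma counit_span : counit_bij gA -> forall (M : grmod gA) x y (v : M x y),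
  span (fun p : M x x * A x y => mact p.1 p.2) (fun p => mc (gid G x) p.1 = p.1) v.
Proof.
move=> cbA M x y; apply: span_total => Q phi phi_lin phi0 v.
have [_ counit_uniq] := cbA M x y Q _ (balanced0 _ _ _ _ _ _).
apply: (counit_uniq phi (fun _ => 0)) => // [r u u' | m a Em _]; first by rewrite scaler0 addr0.
exact: (phi0 (m, a)).
Qed.

Lemma counit_one_decomposable : counit_bij gA -> one_decomposable gA.
Proof.
move=> cbA x y s.
(* The module [A(s^-1)], concentrated at the object [x]. *)
pose ro x' : option (G y x') :=
  if pselect (x' = x) is left e then Some (eq_rect_r (G y) (ginv s) e) else None.
have roE : ro x = Some (ginv s).
  by rewrite /ro; case: pselect => [e|[]] //; rewrite (Prop_irrelevance e erefl).
pose M := shift_grmod gA ro.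
have i0 : 'I_(shift_dim ro x) by rewrite /shift_dim roE; exact: ord0.
have [r [Dr e1]] := counit_span cbA ([ffun _ => cone A y] : M x y).
have {}e1 : cone A y = \sum_(q <- r) q.1 *: cmul (q.2.1 i0) q.2.2.
  move/ffunP/(_ i0): e1; rewrite ffunE sum_ffunE => ->.
  by apply: eq_bigr => q _; rewrite !ffunE.
have {}Dr q : q \in r -> inDeg gA (ginv s) (q.2.1 i0).
  by move/Dr/ffunP/(_ i0); rewrite ffunE roE gcomps1.
exists [seq (q.2.1 i0, gc gA s (q.1 *: q.2.2)) | q : k * (M x x * A x y) <- r]; split.
  by move=> p /mapP[q /Dr Dq ->]; split=> //; apply: inDeg_gc.
rewrite big_map -(inB1 gA y) /inB -(gcompVs s) e1 (klin_sum (gc_klin _ _)).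
apply: eq_big_seq => q /Dr Dq /=.
by rewrite -(gc_cmul_homr _ _ Dq) cmulZr (klinZ (gc_klin _ _)).
Qed.
End Counit.

Theorem theorem8p2 (k : comPzRingType) (X : Type) (G : groupoid X)
  (A : klcat k X) (gA : graded G A) :
  (strongly_graded gA <-> inv_prod_cond gA) /\
  (strongly_graded gA <-> (unit_bij gA /\ counit_bij gA)) /\
  (strongly_graded gA <-> galois gA).
Proof.
have sg_dec : strongly_graded gA -> one_decomposable gA.
  by move/strongly_graded_inv_prod/inv_prod_one_decomposable.
have dec_sg := @one_decomposable_strongly_graded _ _ _ _ gA.
split; [|split]; split.
- exact: strongly_graded_inv_prod.
- by move/inv_prod_one_decomposable/dec_sg.
- by move/sg_dec/one_decomposable_counit; split; [apply: unit_bijective |].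
- by case=> _ /counit_one_decomposable/dec_sg.
- by move/sg_dec/one_decomposable_galois.
- by move/galois_one_decomposable/dec_sg.
Qed.
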